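(* Let $S$ be a free numerical semigroup that is reflective (allowing $S=\mathbb{N}_0$). Then $S=\langle A\rangle$ for a minimal telescopic set $A$ equal to one of: (1) $A=\{1\}$ (genus $0$); (2) $A=\{2,4n+3\}$ for some $n\in\mathbb{N}_0$ (genus $2n+1$); (3) $A=\{3,3n+2\}$ for some $n\in\mathbb{N}_0$ (genus $3n+1$); (4) $A=\{4,4n+2,4n+3\}$ for some $n\in\mathbb{N}_0$ (genus $4n+1$).
   Context: A numerical semigroup is a submonoid $S$ of $(\mathbb{N}_0,+)$ with finite complement; its genus is the number of elements of $\mathbb{N}_0\setminus S$. For a sequence $A=(a_1,\dots,a_k)$ of non-negative integers, let $d_i=\gcd(a_1,\dots,a_i)$, $S_i=\langle a_1,\dots,a_i\rangle$ (the set of $\mathbb{N}_0$-linear combinations), and $c_j=d_{j-1}/d_j$ for $j\ge2$; $A$ is telescopic if $c_ja_j\in S_{j-1}$ for all $j\in\{2,\dots,k\}$. A set is telescopic if it can be ordered into a telescopic sequence. $S$ is free if $S=\langle A\rangle$ for some telescopic set $A$. A numerical semigroup $S$ of genus $g\ge1$ is called reflective if for every $z\in\{0,1,\dots,g-1\}$ exactly one of $z$ and $z+g$ belongs to $S$; $\mathbb{N}_0$ is also considered reflective. *)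

From mathcomp Require Import all_boot.
Set Implicit Arguments. Unset Strict Implicit. Unset Printing Implicit Defensive.

Definition gen (s : seq nat) (x : nat) : Prop :=
  exists c : seq nat, size c = size s /\ x = sumn [seq p.1 * p.2 | p <- zip c s].

Definition numerical_semigroup (S : pred nat) : Prop :=
  S 0 /\ (forall x y, S x -> S y -> S (x + y)) /\ (exists N, forall x, N <= x -> S x).

Definition has_genus (S : pred nat) (g : nat) : Prop :=
  exists N, (forall x, N <= x -> S x) /\ count (fun x => ~~ S x) (iota 0 N) = g.

Definition pgcd (s : seq nat) : nat := foldr gcdn 0 s.

(* telescopic sequence (a_1,...,a_k): for j = 2..k (0-based index j = 1..k-1),
   c_j a_j \in S_{j-1} with c_j = d_{j-1}/d_j *)
Definition telescopic (s : seq nat) : Prop :=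
  forall j, 0 < j < size s ->
    gen (take j s) ((pgcd (take j s) %/ pgcd (take j.+1 s)) * nth 0 s j).

Definition telescopic_set (A : seq nat) : Prop :=
  uniq A /\ exists s, perm_eq s A /\ telescopic s.

Definition generated_by (S : pred nat) (A : seq nat) : Prop :=
  forall x, S x <-> gen A x.

Definition free_sg (S : pred nat) : Prop :=
  exists A, telescopic_set A /\ generated_by S A.

Definition minimal_gens (A : seq nat) : Prop :=
  uniq A /\ forall x, x \in A -> ~ gen (rem x A) x.

Definition reflective (S : pred nat) : Prop :=
  exists g, has_genus S g /\
    (g = 0 \/ (1 <= g /\ forall z, z < g -> (S z (+) S (z + g)) = true)).

From mathcomp Require Import all_boot zify.
Set Implicit Arguments. Unset Strict Implicit.

(* A reflective semigroup S of genus g >= 1 and multiplicity m is determined by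
   m and g: below g it consists of the multiples of m, on [g, 2g) of the x with
   m not dividing x - g, and it contains every x >= 2g.  Freeness is used only
   through one gluing step of a telescopic sequence: there are D >= 2 and
   a \in S coprime to D such that every x \in S is k a + y with k < D and
   y \in S divisible by D.  Applied to g + 1, ..., g + m - 1 (all in S), this
   leaves at most one of them not divisible by D; as D divides no two
   consecutive numbers, m <= 4.  A decomposition of 2g + 1 then rules out
   every residue of g mod m except 1.
   The three semigroups that remain are generated by the listed sets. *)

Lemma gen_nil y : gen [::] y <-> y = 0.
Proof. by split=> [[[|? ?] [// _ ->]] | ->]; last exists [::]. Qed.

Lemma gen_cons x l y :
  gen (x :: l) y <-> exists k y', y = k * x + y' /\ gen l y'.
Proof.
split=> [[[|k c] [//= [Hs] ->]] | [k [_ [-> [c [Hs ->]]]]]].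
  by exists k, (sumn [seq p.1 * p.2 | p <- zip c l]); split; last exists c.
by exists (k :: c); rewrite /= Hs.
Qed.

Lemma gen_single a x : gen [:: a] x <-> exists k, x = k * a.
Proof.
rewrite gen_cons; split=> [[k [_ [-> /gen_nil ->]]] | [k ->]].
  by exists k; rewrite addn0.
by exists k, 0; rewrite addn0 gen_nil.
Qed.

Lemma gen_pair a b x : gen [:: a; b] x <-> exists k l, x = k * a + l * b.
Proof.
rewrite gen_cons; split=> [[k [_ [-> /gen_cons [l [_ [-> /gen_nil ->]]]]]] | [k [l ->]]].
  by exists k, l; rewrite addn0.
by exists k, (l * b); split=> //; apply/gen_cons; exists l, 0; rewrite addn0 gen_nil.
Qed.

Lemma gen_triple a b c x :
  gen [:: a; b; c] x <-> exists k l p, x = k * a + l * b + p * c.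
Proof.
rewrite gen_cons; split=> [[k [_ [-> /gen_pair [l [p ->]]]]] | [k [l [p ->]]]].
  by exists k, l, p; rewrite addnA.
by exists k, (l * b + p * c); split; [rewrite addnA | apply/gen_pair; exists l, p].
Qed.

Lemma gen_ind (Q : nat -> Prop) (l : seq nat) :
  Q 0 -> (forall a b, Q a -> Q b -> Q (a + b)) -> {in l, forall x, Q x} ->
  forall y, gen l y -> Q y.
Proof.
move=> Q0 QD; elim: l => [|x l IHl] Ql y; first by move/gen_nil->.
case/gen_cons=> k [y' [-> /IHl Qy']]; apply: (QD); last first.
  by apply: Qy' => z lz; apply: Ql; rewrite inE lz orbT.
have Qx : Q x by apply: Ql; rewrite inE eqxx.
by elim: k => [|k IHk]; rewrite ?mulSn //; apply: (QD).
Qed.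

Lemma gen0 l : gen l 0.
Proof. by elim: l => [|x l IHl]; [apply/gen_nil | apply/gen_cons; exists 0, 0]. Qed.

Lemma genD l a b : gen l a -> gen l b -> gen l (a + b).
Proof.
elim: l a b => [|x l IHl] a b; first by move=> /gen_nil-> /gen_nil->; apply/gen_nil.
case/gen_cons=> k [y [-> Hy]] /gen_cons [k' [y' [-> Hy']]].
by apply/gen_cons; exists (k + k'), (y + y'); split; [lia | apply: IHl].
Qed.

Lemma gen_mem l x : x \in l -> gen l x.
Proof.
elim: l => // z l IHl; rewrite inE => /predU1P [-> | lx]; apply/gen_cons.
  by exists 1, 0; split; [lia | apply: gen0].
by exists 0, x; split; last exact: IHl.
Qed.

Lemma genMn l k a : gen l a -> gen l (k * a).
Proof. by move=> la; elim: k => [|k IHk]; [apply: gen0 | rewrite mulSn; apply: genD]. Qed.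

Lemma gen_subset l1 l2 : {in l1, forall x, gen l2 x} -> forall y, gen l1 y -> gen l2 y.
Proof. by move=> sub12; apply: gen_ind => //; [apply: gen0 | apply: genD]. Qed.

Lemma gen_perm l1 l2 : perm_eq l1 l2 -> forall y, gen l1 y <-> gen l2 y.
Proof.
by move=> p12 y; split; apply: gen_subset => x lx; apply: gen_mem;
  rewrite ?(perm_mem p12) // -(perm_mem p12).
Qed.

Lemma gen_rcons l a y :
  gen (rcons l a) y <-> exists k y', y = k * a + y' /\ gen l y'.
Proof. by rewrite (gen_perm (l2 := a :: l)) ?perm_rcons ?gen_cons. Qed.

Lemma pgcd_dvd l x : x \in l -> pgcd l %| x.
Proof.
elim: l => //= z l IHl; rewrite inE => /predU1P [-> | /IHl]; first exact: dvdn_gcdl.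
exact: dvdn_trans (dvdn_gcdr _ _).
Qed.

Lemma gen_pgcd_dvd l y : gen l y -> pgcd l %| y.
Proof.
move: y; apply: (@gen_ind (fun y => pgcd l %| y)) => //.
  exact: dvdn_add.
exact: pgcd_dvd.
Qed.

Lemma dvdn_pgcd d l : {in l, forall x, d %| x} -> d %| pgcd l.
Proof.
elim: l => //= z l IHl dl; rewrite dvdn_gcd dl ?mem_head // IHl // => x lx.
by apply: dl; rewrite inE lx orbT.
Qed.

Lemma pgcd_rcons l a : pgcd (rcons l a) = gcdn (pgcd l) a.
Proof. by elim: l => [|z l IHl] /=; rewrite ?gcdn0 ?gcd0n // IHl gcdnA. Qed.

Lemma pgcd_take_dvd s i j : i <= j -> pgcd (take j s) %| pgcd (take i s).
Proof.
move=> ij; apply: dvdn_pgcd => x; rewrite -(take_takel s ij) => /mem_take.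
exact: pgcd_dvd.
Qed.

Lemma gen_rcons_redundant l b : gen l b -> forall y, gen (rcons l b) y -> gen l y.
Proof.
move=> lb; apply: gen_subset => x; rewrite mem_rcons inE => /predU1P [-> // |].
exact: gen_mem.
Qed.

Lemma telescopic_take_gen s j : telescopic s -> pgcd (take j s) = 1 ->
  forall y, gen s y -> gen (take j s) y.
Proof.
move=> ts pj; have pgcd1 i : j <= i -> pgcd (take i s) = 1.
  by move=> ji; apply/eqP; rewrite -dvdn1 -pj pgcd_take_dvd.
have j_gt0 : 0 < j by case: j pj {pgcd1} => //; rewrite take0.
suff take_gen k y : gen (take (j + k) s) y -> gen (take j s) y.
  by move=> y sy; apply: (take_gen (size s)); rewrite take_oversize // leq_addl.
elim: k y => [|k IHk] y; first by rewrite addn0.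
case: (ltnP (j + k) (size s)) => [ks | sk].
  (* past j every ratio c_i is 1, so s_i lies in the span of its predecessors *)
  have s_jk : gen (take (j + k) s) (nth 0 s (j + k)).
    have := ts (j + k); rewrite !pgcd1 ?leqW ?leq_addr // divn1 mul1n; apply.
    by rewrite ks (leq_trans j_gt0 (leq_addr _ _)).
  by rewrite addnS (take_nth 0 ks) => /(gen_rcons_redundant s_jk) /IHk.
rewrite addnS take_oversize ?(leqW sk) // => sy.
by apply: IHk; rewrite take_oversize.
Qed.

Lemma gen_rcons_decomp l a : 0 < pgcd l -> gen l (pgcd l * a) ->
  forall x, gen (rcons l a) x ->
  exists k y, [/\ k < pgcd l, x = k * a + y, pgcd l %| y & gen l y].
Proof.
set D := pgcd l => D_gt0 lDa x /gen_rcons [k [y [-> ly]]].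
exists (k %% D), (y + k %/ D * (D * a)); split.
- exact: ltn_pmod.
- by rewrite {1}(divn_eq k D) mulnDl mulnA [k %/ D * D]mulnC; lia.
- by apply: dvdn_add; [exact: gen_pgcd_dvd | apply/dvdn_mull/dvdn_mulr].
- by apply: genD => //; apply: genMn.
Qed.

Lemma telescopic_gluing s : telescopic s -> pgcd s = 1 -> ~ gen s 1 ->
  exists D a, [/\ 1 < D, gen s a, coprime a D &
    forall x, gen s x -> exists k y, [/\ k < D, x = k * a + y, D %| y & gen s y]].
Proof.
move=> ts ps1 ns1; have ex1 : exists j, pgcd (take j s) == 1.
  by exists (size s); rewrite take_size ps1.
(* glue along the generator at which the gcd of the prefix first drops to 1 *)
case: (ex_minnP ex1) => j0 /eqP pj0 min_j0.
have j0_le : j0 <= size s by apply: min_j0; rewrite take_size ps1.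
have j0_gt0 : 0 < j0 by case: j0 pj0 {min_j0 j0_le} => //; rewrite take0.
set j := j0.-1; have j0E : j0 = j.+1 by rewrite prednK.
have js : j < size s by rewrite -ltnS -j0E.
set a := nth 0 s j; set P := take j s; set D := pgcd P.
have take_j0 : take j0 s = rcons P a by rewrite j0E (take_nth 0 js).
have Dn1 : D != 1.
  by apply/eqP => D1; have := min_j0 j; rewrite -/P -/D D1 eqxx j0E ltnn => /(_ isT).
have coprime_Da : gcdn D a = 1 by rewrite -pgcd_rcons -take_j0.
have sa : gen s a by apply: gen_mem; rewrite mem_nth.
have D_gt0 : 0 < D.
  by rewrite lt0n; apply/eqP => D0; move: coprime_Da; rewrite D0 gcd0n => a1; rewrite a1 in sa.
have j_gt0 : 0 < j by move: D_gt0; rewrite /D /P; case: (j) => //; rewrite take0.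
have PDa : gen P (D * a).
  by have := ts j; rewrite j_gt0 js -j0E pj0 divn1; apply.
have Ps y : gen P y -> gen s y by apply: gen_subset => z /mem_take; apply: gen_mem.
exists D, a; split; [lia | by [] | by rewrite /coprime gcdnC coprime_Da |].
move=> x /(telescopic_take_gen ts pj0); rewrite take_j0 => /(gen_rcons_decomp D_gt0 PDa).
by case=> k [y [kD -> Dy Py]]; exists k, y; split=> //; apply: Ps.
Qed.

Lemma count_iota0_mono (P : pred nat) k k' :
  k <= k' -> count P (iota 0 k) <= count P (iota 0 k').
Proof. by move=> kk'; rewrite -(subnKC kk') iotaD count_cat leq_addr. Qed.

Lemma has_genus_count_le S g n :
  has_genus S g -> count (fun x => ~~ S x) (iota 0 n) <= g.
Proof.
case=> N [SN <-]; apply: leq_trans (count_iota0_mono _ (leq_maxl n N)) _.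
rewrite -(subnKC (leq_maxr n N)) iotaD count_cat add0n.
rewrite [count _ (iota N _)](@eq_in_count _ _ pred0) ?count_pred0 ?addn0 // => x.
by rewrite mem_iota => /andP [/SN ->].
Qed.

Lemma count_notin_iota_gt0 (S : pred nat) x a n :
  ~~ S x -> a <= x < a + n -> 0 < count (fun y => ~~ S y) (iota a n).
Proof. by move=> Sx xn; rewrite -has_count; apply/hasP; exists x; rewrite ?mem_iota. Qed.

Lemma has_genus0 S : has_genus S 0 -> forall x, S x.
Proof.
move=> gS x; apply/negPn/negP => Sx.
have := has_genus_count_le x.+1 gS.
by rewrite leqNgt (count_notin_iota_gt0 (a := 0) Sx) // add0n ltnSn.
Qed.

Lemma numerical_semigroup_multiplicity S : numerical_semigroup S ->
  exists m, [/\ 0 < m, S m & forall y, 0 < y < m -> ~~ S y].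
Proof.
case=> _ [_ [N SN]]; have pos : exists n, (0 < n) && S n.
  by exists N.+1; rewrite SN.
case: (ex_minnP pos) => m /andP [m0 Sm] min_m; exists m; split=> // y /andP [y0 ym].
by apply/negP=> Sy; have := min_m y; rewrite y0 Sy leqNgt ym => /(_ isT).
Qed.

Definition reflective_sg (m g x : nat) : bool :=
  if x < g then m %| x else if x < 2 * g then ~~ (m %| x - g) else true.

Section Reflective.

Variables (S : pred nat) (g m : nat).
Hypotheses (HS : numerical_semigroup S) (gS : has_genus S g) (g_gt0 : 0 < g).
Hypothesis S_refl : forall z, z < g -> S z (+) S (z + g).
Hypotheses (m_gt0 : 0 < m) (Sm : S m) (m_min : forall y, 0 < y < m -> ~~ S y).

Let S0 : S 0. Proof. by case: HS. Qed.
Let SD x y : S x -> S y -> S (x + y). Proof. by case: HS => _ [SD _]; apply: SD. Qed.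

Lemma reflective_count : count (fun x => ~~ S x) (iota 0 (2 * g)) = g.
Proof.
rewrite mul2n -addnn iotaD count_cat add0n.
have -> : iota g g = map (addn g) (iota 0 g) by rewrite -iotaDl addn0.
rewrite count_map [count (preim _ _) _](@eq_in_count _ _ S) => [|z].
  by rewrite addnC count_predC size_iota.
by rewrite mem_iota add0n /= addnC => /S_refl; case: (S z); case: (S (z + g)).
Qed.

Lemma reflective_large x : 2 * g <= x -> S x.
Proof.
move=> gx; apply/negPn/negP => Sx; have := has_genus_count_le x.+1 gS.
rewrite -(subnKC (leq_trans gx (leqnSn x))) iotaD count_cat reflective_count.
rewrite leqNgt -[X in X < _]addn0 ltn_add2l.
by rewrite (count_notin_iota_gt0 Sx) // gx add0n subnKC ?ltnSn // leqW.
Qed.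

Lemma reflective_below z : z < g -> S z = (m %| z).
Proof.
elim/ltn_ind: z => z IHz zg; case: (ltnP z m) => [zm | mz].
  case: (posnP z) => [-> | z0]; first by rewrite S0 dvdn0.
  rewrite (negbTE (m_min _)) ?z0 //; apply/esym/negP => /(dvdn_leq z0).
  by rewrite leqNgt zm.
have zE : z = z - m + m by rewrite subnK.
rewrite {2}zE dvdn_addl // -IHz; try lia.
case Szm: (S (z - m)); first by rewrite zE SD.
have Szg : S (z + g).
  have := S_refl (z := z - m) ltac:(lia); rewrite Szm /= => Szmg.
  by rewrite (_ : z + g = z - m + g + m); [apply: SD | lia].
by have := S_refl zg; rewrite Szg; case: (S z).
Qed.

Lemma reflectiveE x : S x = reflective_sg m g x.
Proof.
rewrite /reflective_sg; case: ltnP => [xg | gx]; first exact: reflective_below.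
case: ltnP => [x2g | /reflective_large //].
have := S_refl (z := x - g) ltac:(lia); rewrite subnK // reflective_below; last by lia.
by case: (S x); case: (m %| x - g).
Qed.

Lemma multiplicity_gt1 : 1 < m.
Proof.
case: ltnP => // m1; have m_1 : m = 1 by lia.
have Sg : S g.
  rewrite -(subnK g_gt0); apply: SD; last by rewrite -m_1.
  by rewrite reflective_below ?m_1 ?dvd1n //; lia.
by have := S_refl g_gt0; rewrite S0 add0n Sg.
Qed.

Lemma multiplicity_le_genus_succ : m <= g.+1.
Proof.
have Sg1 : S g.+1.
  case: (ltnP 1 g) => [g2 | g1]; last by apply: reflective_large; lia.
  by have := S_refl g2; rewrite (negbTE (m_min _)) // multiplicity_gt1.
by rewrite leqNgt; apply/negP => gm; have := m_min (y := g.+1); rewrite Sg1 gm => /(_ isT).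
Qed.

Lemma multiplicity_ndvd_genus : ~~ (m %| g).
Proof.
apply/negP => mg; have Sg : S g.
  rewrite -(subnK (dvdn_leq g_gt0 mg)); apply: SD => //.
  by rewrite reflective_below ?dvdn_sub //; lia.
by have := S_refl g_gt0; rewrite S0 add0n Sg.
Qed.

End Reflective.

Lemma dvdn_eq_close d x y : d %| x -> d %| y -> x < y + d -> y < x + d -> x = y.
Proof.
move=> /dvdnP [p ->] /dvdnP [q ->]; rewrite -[q * d + d]mulSnr -[p * d + d]mulSnr !ltn_mul2r.
by case/andP=> _ pq /andP [_ qp]; congr (_ * _); apply/eqP; rewrite eqn_leq -ltnS pq -ltnS qp.
Qed.

Lemma ndvdn_succ d n : 1 < d -> d %| n -> ~~ (d %| n.+1).
Proof. by move=> d_gt1 dn; rewrite -addn1 (dvdn_addr _ dn) dvdn1 neq_ltn d_gt1 orbT. Qed.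

Lemma muln_cases l c : [\/ l * c = 0, l * c = c | 2 * c <= l * c].
Proof.
case: l => [|[|l]]; [exact: Or31 | apply: Or32; exact: mul1n |].
by apply: Or33; rewrite leq_mul2r orbT.
Qed.

Section Gluing.

Variables (S : pred nat) (g m D a : nat).
Hypotheses (g_gt0 : 0 < g) (m_gt1 : 1 < m) (m_le : m <= g.+1) (m_ndvd : ~~ (m %| g)).
Hypotheses (Sm : S m) (m_min : forall y, 0 < y < m -> ~~ S y).
Hypothesis SE : forall x, S x = reflective_sg m g x.
Hypotheses (D_gt1 : 1 < D) (Sa : S a) (coprime_aD : coprime a D).
Hypothesis S_glue :
  forall x, S x -> exists k y, [/\ k < D, x = k * a + y, D %| y & S y].

Let D_ndvd_a : ~~ (D %| a).
Proof.
apply/negP => Da; have : D %| gcdn a D by rewrite dvdn_gcd Da dvdnn.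
by rewrite (eqP coprime_aD) dvdn1; case: D D_gt1 => [|[]].
Qed.

Let m_le_a : m <= a.
Proof.
rewrite leqNgt; apply/negP => am; have a_gt0 : 0 < a.
  by rewrite lt0n; apply: contraNneq D_ndvd_a => ->; apply: dvdn0.
by have := m_min (y := a); rewrite a_gt0 am Sa => /(_ isT).
Qed.

Let Sg : ~~ S g.
Proof. by rewrite SE /reflective_sg ltnn ltn_Pmull // subnn dvdn0. Qed.

Let S_shift j : 0 < j < m -> S (g + j).
Proof.
case/andP=> j_gt0 jm; rewrite SE /reflective_sg ltnNge leq_addr /= addnC addnK.
case: ifP => // _; apply/negP => /(dvdn_leq j_gt0); by rewrite leqNgt jm.
Qed.

Lemma gluing_multiplicity : a = m \/ (D %| m /\ g < a).
Proof.
have [k [y [_ mE Dy Sy]]] := S_glue Sm.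
case: (posnP k) => [k0 | k_gt0]; last first.
  left; apply/eqP; rewrite eqn_leq m_le_a andbT mE.
  exact: leq_trans (leq_pmull _ k_gt0) (leq_addr _ _).
have Dm : D %| m by rewrite mE k0 add0n.
right; split => //; rewrite ltn_neqAle; apply/andP; split.
  by apply: contraNneq Sg => ->.
rewrite leqNgt; apply/negP => ag; move: (Sa); rewrite SE /reflective_sg ag => ma.
by move: D_ndvd_a; rewrite (dvdn_trans Dm ma).
Qed.

Lemma gluing_shift j : 0 < j < m -> ~~ (D %| g + j) ->
  (a = m /\ m %| g + j) \/ (a != m /\ a = g + j).
Proof.
move=> jm nDj; have [k [y [_ E Dy Sy]]] := S_glue (S_shift jm).
have k_gt0 : 0 < k by rewrite lt0n; apply: contraNneq nDj => k0; rewrite E k0 add0n.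
have ak : a <= k * a := leq_pmull _ k_gt0.
case: gluing_multiplicity => [am | [Dm ga]].
  have yg : y < g by lia.
  move: Sy; rewrite SE /reflective_sg yg => my.
  by left; split => //; rewrite E dvdn_add // am dvdn_mull.
have a_ne_m : a != m by apply: contraNneq D_ndvd_a => ->.
have y0 : y = 0.
  apply/eqP; apply: contraTT Sy; rewrite -lt0n => y_gt0; apply: m_min; lia.
have k1 : k = 1.
  have : k * a < 2 * a by lia.
  by rewrite ltn_mul2r => /andP [_]; lia.
by right; split => //; rewrite E y0 k1; lia.
Qed.

Lemma gluing_shift_unique j1 j2 : 0 < j1 < m -> 0 < j2 < m ->
  ~~ (D %| g + j1) -> ~~ (D %| g + j2) -> j1 = j2.
Proof.
move=> j1m j2m /(gluing_shift j1m) [[am d1] | [an1 e1]] /(gluing_shift j2m) [[am2 d2] | [an2 e2]].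
- by apply/(@addnI g)/(dvdn_eq_close d1 d2); lia.
- by move: an2; rewrite am eqxx.
- by move: an1; rewrite am2 eqxx.
- by apply/(@addnI g); rewrite -e1.
Qed.

Lemma multiplicity_le4 : m <= 4.
Proof.
rewrite leqNgt; apply/negP => m_gt4.
have pick j : 0 < j -> j.+1 < m -> exists2 i, j <= i <= j.+1 & ~~ (D %| g + i).
  move=> j_gt0 jm; case: (boolP (D %| g + j)) => Dj; last by exists j; rewrite ?leqnn ?leqnSn.
  by exists j.+1; rewrite ?leqnSn ?leqnn // addnS ndvdn_succ.
have [i1 i1r nD1] := pick 1 isT (ltn_trans (isT : 2 < 4) m_gt4).
have [i2 i2r nD2] := pick 3 isT m_gt4.
by have := gluing_shift_unique (j1 := i1) (j2 := i2) _ _ nD1 nD2; lia.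
Qed.

Let S_2g1 : S (2 * g + 1).
Proof. by rewrite SE /reflective_sg !ifF //; apply/negbTE; rewrite -leqNgt; lia. Qed.

Lemma genus_mod3 : m = 3 -> g %% 3 = 1.
Proof.
move=> m3; have : g %% 3 = 1 \/ g %% 3 = 2 by move: m_ndvd; rewrite m3; lia.
case=> // g2; have [k [y [kD E Dy Sy]]] := S_glue S_2g1.
case: gluing_multiplicity => [am | [Dm _]].
- have Dg2 : D %| g + 2.
    apply/negPn/negP => nD; case: (gluing_shift (j := 2) _ nD); rewrite ?m3 //; lia.
  case: (posnP k) => [k0 | k_gt0].
    have : D %| 2 * (g + 2) by rewrite dvdn_mull.
    rewrite (_ : 2 * (g + 2) = y + 3); last by move: E; rewrite k0 mul0n add0n; lia.
    by rewrite (dvdn_addr _ Dy) -m3 -am (negbTE D_ndvd_a).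
  rewrite am m3 in E; move: Sy; rewrite SE /reflective_sg m3.
  by case: ifP => c1; [|case: ifP => c2] => *; lia.
- have D3 : D = 3.
    by apply/prime_nt_dvdP => //; [rewrite neq_ltn D_gt1 orbT | rewrite -m3].
  have nDg2 : ~~ (D %| g + 2) by rewrite addnS ndvdn_succ // D3; lia.
  have r2 : 0 < 2 < m by rewrite m3.
  case: (gluing_shift r2 nDg2) => [[am _] | [_ ae]]; first by lia.
  by move: kD E Dy; rewrite D3 ae; case: k => [|[|[|]]]; lia.
Qed.

Lemma genus_mod4 : m = 4 -> g %% 4 = 1.
Proof.
move=> m4; have range j : 0 < j < 4 -> 0 < j < m by rewrite m4.
have nDg2 : ~~ (D %| g + 2).
  apply/negP => Dg2.
  have nDg1 : ~~ (D %| g + 1).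
    by apply/negP => /(ndvdn_succ D_gt1); rewrite -addnS Dg2.
  have nDg3 : ~~ (D %| g + 3) by rewrite addnS ndvdn_succ.
  by have := gluing_shift_unique (j1 := 1) (j2 := 3) (range 1 isT) (range 3 isT) nDg1 nDg3.
have Dg j : 0 < j < 4 -> j != 2 -> D %| g + j.
  move=> jr j2; apply/negPn/negP => nDj.
  by have := gluing_shift_unique (range _ jr) (range 2 isT) nDj nDg2; apply/eqP.
have D2 : D = 2.
  apply/prime_nt_dvdP => //; first by rewrite neq_ltn D_gt1 orbT.
  by rewrite -(dvdn_addr _ (Dg 1 isT isT)) -addnA Dg.
have ae : a = g + 2.
  case: (gluing_shift (range 2 isT) nDg2) => [[_ m_dvd] | [_ //]].
  by move: m_dvd (Dg 1 isT isT); rewrite m4 D2; lia.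
have : g %% 4 = 1 \/ g %% 4 = 3 by move: (Dg 1 isT isT); rewrite D2; lia.
case=> // g3; have [k [y [kD E Dy Sy]]] := S_glue S_2g1.
move: Sy; rewrite SE /reflective_sg m4; move: kD E Dy; rewrite D2 ae.
by case: k => [|[|]] //; case: ifP => c1 *; lia.
Qed.

Lemma genus_mod_multiplicity : g %% m = 1.
Proof.
have : m = 2 \/ m = 3 \/ m = 4 by have := multiplicity_le4; lia.
case=> [m2 | [m3 | m4]]; last by rewrite m4 genus_mod4.
  by move: m_ndvd; rewrite m2; lia.
by rewrite m3 genus_mod3.
Qed.

End Gluing.

Lemma reflective_sg2 n x : reflective_sg 2 (2 * n + 1) x <-> gen [:: 2; 4 * n + 3] x.
Proof.
rewrite gen_pair /reflective_sg; split.
  case: (boolP (2 %| x)) => x_even; first by exists (x %/ 2), 0; lia.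
  case: ltnP => c1 //; case: ltnP => c2 => [|_]; first by move: x_even; lia.
  by exists ((x - (4 * n + 3)) %/ 2), 1; lia.
case=> k [l ->]; have := muln_cases l (4 * n + 3).
by move: (l * _) => L HL; case: ltnP => c1; [|case: ltnP => c2]; case: HL; lia.
Qed.

Lemma reflective_sg3 n x : reflective_sg 3 (3 * n + 1) x <-> gen [:: 3; 3 * n + 2] x.
Proof.
rewrite gen_pair /reflective_sg; split.
  have : x %% 3 = 0 \/ x %% 3 = 1 \/ x %% 3 = 2 by lia.
  case=> [xr | [xr | xr]]; first by move=> _; exists (x %/ 3), 0; lia.
    case: ltnP => c1; first lia.
    case: ltnP => c2 => [|_]; first lia.
    by exists ((x - 2 * (3 * n + 2)) %/ 3), 2; lia.
  case: ltnP => c1 => [? | _]; first lia.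
  by exists ((x - (3 * n + 2)) %/ 3), 1; lia.
case=> k [l ->]; have := muln_cases l (3 * n + 2).
by move: (l * _) => L HL; case: ltnP => c1; [|case: ltnP => c2]; case: HL; lia.
Qed.

Lemma reflective_sg4 n x :
  reflective_sg 4 (4 * n + 1) x <-> gen [:: 4; 4 * n + 2; 4 * n + 3] x.
Proof.
rewrite gen_triple /reflective_sg; split.
  have : x %% 4 = 0 \/ x %% 4 = 1 \/ x %% 4 = 2 \/ x %% 4 = 3 by lia.
  case=> [xr | [xr | [xr | xr]]]; first by move=> _; exists (x %/ 4), 0, 0; lia.
  - case: ltnP => c1; first lia.
    case: ltnP => c2 => [|_]; first lia.
    by exists ((x - (8 * n + 5)) %/ 4), 1, 1; lia.
  - case: ltnP => c1 => [? | _]; first lia.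
    by exists ((x - (4 * n + 2)) %/ 4), 1, 0; lia.
  - case: ltnP => c1 => [? | _]; first lia.
    by exists ((x - (4 * n + 3)) %/ 4), 0, 1; lia.
case=> k [l [p ->]]; have := muln_cases l (4 * n + 2); have := muln_cases p (4 * n + 3).
move: (l * _) (p * _) => L P HP HL.
by case: ltnP => c1; [|case: ltnP => c2]; case: HL; case: HP; lia.
Qed.

Lemma minimal_gens_pair a b : a != b ->
  ~ (exists k, a = k * b) -> ~ (exists k, b = k * a) -> minimal_gens [:: a; b].
Proof.
move=> ab na nb; split; first by rewrite /= inE ab.
by move=> x; rewrite !inE => /pred2P [-> | ->] /=; rewrite ?eqxx ?(negbTE ab) => /gen_single.
Qed.

Lemma minimal_gens2 n : minimal_gens [:: 2; 4 * n + 3].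
Proof.
by apply: minimal_gens_pair => [|[k]|[k]]; [|case: (muln_cases k (4 * n + 3))|]; lia.
Qed.

Lemma minimal_gens3 n : minimal_gens [:: 3; 3 * n + 2].
Proof.
by apply: minimal_gens_pair => [|[k]|[k]]; [|case: (muln_cases k (3 * n + 2))|]; lia.
Qed.

Lemma minimal_gens4 n : 0 < n -> minimal_gens [:: 4; 4 * n + 2; 4 * n + 3].
Proof.
move=> n_gt0; split; first by rewrite /= !inE; apply/and3P; split; apply/negP; lia.
move=> x; rewrite !inE => /or3P [] /eqP -> /=; rewrite ?eqxx; do ?case: eqP => ?; try lia.
- move/gen_pair => [k [l E]].
  by case: (muln_cases k (4 * n + 2)); case: (muln_cases l (4 * n + 3)); lia.
- by move/gen_pair => [k [l E]]; case: (muln_cases l (4 * n + 3)); lia.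
- by move/gen_pair => [k [l E]]; case: (muln_cases l (4 * n + 2)); lia.
Qed.

Lemma telescopic_pair a b : gen [:: a] (a %/ gcdn a b * b) -> telescopic [:: a; b].
Proof. by move=> ab [|[|j]] //= _; rewrite !gcdn0. Qed.

Lemma telescopic_set2 n : telescopic_set [:: 2; 4 * n + 3].
Proof.
split; first by rewrite /= inE; apply/negP; lia.
exists [:: 2; 4 * n + 3]; split => //; apply: telescopic_pair.
rewrite (_ : 4 * n + 3 = (2 * n + 1) * 2 + 1) ?gcdnMDl ?gcdn1 ?divn1; last lia.
by apply/gen_single; exists ((2 * n + 1) * 2 + 1); rewrite mulnC.
Qed.

Lemma telescopic_set3 n : telescopic_set [:: 3; 3 * n + 2].
Proof.
split; first by rewrite /= inE; apply/negP; lia.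
exists [:: 3; 3 * n + 2]; split => //; apply: telescopic_pair.
rewrite (_ : 3 * n + 2 = n * 3 + 2) ?gcdnMDl ?divn1; last lia.
by apply/gen_single; exists (n * 3 + 2); rewrite mulnC.
Qed.

Lemma telescopic_set4 n : telescopic_set [:: 4; 4 * n + 2; 4 * n + 3].
Proof.
split; first by rewrite /= !inE; apply/and3P; split; apply/negP; lia.
exists [:: 4; 4 * n + 2; 4 * n + 3]; split => // -[|[|[|j]]] //= _.
  rewrite !gcdn0 (_ : 4 * n + 2 = n * 4 + 2) ?gcdnMDl; last lia.
  by apply/gen_single; exists (2 * n + 1); rewrite (_ : 4 %/ gcdn 4 2 = 2) //; lia.
rewrite !gcdn0 (_ : 4 * n + 3 = (4 * n + 2) + 1) ?gcdnDl ?gcdn1 ?divn1; last lia.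
rewrite (_ : 4 * n + 2 = n * 4 + 2) ?gcdnMDl; last lia.
by apply/gen_pair; exists (n + 1), 1; rewrite (_ : gcdn 4 2 = 2) //; lia.
Qed.

Lemma generated_pgcd S s : numerical_semigroup S -> generated_by S s -> pgcd s = 1.
Proof.
case=> _ [_ [N SN]] Ss; have dvd_S x : N <= x -> pgcd s %| x.
  by move=> /SN /Ss; apply: gen_pgcd_dvd.
by apply/eqP; rewrite -dvdn1 -(dvdn_addr _ (dvd_S N (leqnn N))) addn1 dvd_S.
Qed.

Lemma free_reflective_structure S g : numerical_semigroup S -> free_sg S ->
  has_genus S g -> 0 < g -> (forall z, z < g -> S z (+) S (z + g)) ->
  exists m, [/\ forall x, S x = reflective_sg m g x, 1 < m <= 4, m <= g.+1 & g %% m = 1].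
Proof.
move=> HS [A [[_ [s [sA ts]]] SA]] gS g_gt0 S_refl.
have Ss : generated_by S s by move=> x; rewrite SA (gen_perm sA).
have [m [m_gt0 Sm m_min]] := numerical_semigroup_multiplicity HS.
have m_gt1 := multiplicity_gt1 HS g_gt0 S_refl m_gt0 Sm m_min.
have m_le := multiplicity_le_genus_succ HS gS g_gt0 S_refl m_gt0 Sm m_min.
have m_ndvd := multiplicity_ndvd_genus HS g_gt0 S_refl m_gt0 Sm m_min.
have SE := reflectiveE HS gS g_gt0 S_refl m_gt0 Sm m_min.
have ns1 : ~ gen s 1 by move/Ss; apply/negP/m_min; rewrite m_gt1.
have [D [a [D_gt1 /Ss Sa coprime_aD s_glue]]] :=
  telescopic_gluing ts (generated_pgcd HS Ss) ns1.
have S_glue x : S x -> exists k y, [/\ k < D, x = k * a + y, D %| y & S y].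
  by move/Ss/s_glue => [k [y [kD -> Dy /Ss Sy]]]; exists k, y.
have m_le4 := multiplicity_le4 g_gt0 m_gt1 m_le m_ndvd Sm m_min SE D_gt1 Sa coprime_aD S_glue.
have := genus_mod_multiplicity g_gt0 m_gt1 m_le m_ndvd Sm m_min SE D_gt1 Sa coprime_aD S_glue.
by exists m; rewrite m_gt1.
Qed.

Unset Implicit Arguments.

Theorem mainTheorem13 (S : pred nat) :
  numerical_semigroup S -> free_sg S -> reflective S ->
  exists A : seq nat,
    telescopic_set A /\ minimal_gens A /\ generated_by S A /\
    [\/ perm_eq A [:: 1] /\ has_genus S 0,
        exists n, perm_eq A [:: 2; 4 * n + 3] /\ has_genus S (2 * n + 1),
        exists n, perm_eq A [:: 3; 3 * n + 2] /\ has_genus S (3 * n + 1)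
      | exists n, perm_eq A [:: 4; 4 * n + 2; 4 * n + 3] /\ has_genus S (4 * n + 1)].
Proof.
move=> HS Sfree [g [gS [g0 | [g_gt0 S_refl]]]].
  subst g; exists [:: 1]; split; first by split=> //; exists [:: 1]; split=> // -[|[]].
  split; first by split=> // x; rewrite inE => /eqP -> /gen_nil.
  split; last by apply: Or41.
  by move=> x; split=> _; [apply/gen_single; exists x; rewrite muln1 | apply: has_genus0].
have [m [SE /andP [m_gt1 m_le4] m_le g_mod]] :=
  free_reflective_structure HS Sfree gS g_gt0 S_refl.
have gE : g = m * (g %/ m) + 1 by rewrite {1}(divn_eq g m) g_mod mulnC.
move: (g %/ m) gE => n gE; rewrite gE in gS SE.
have : m = 2 \/ m = 3 \/ m = 4 by lia.
case=> [m2 | [m3 | m4]].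
- exists [:: 2; 4 * n + 3]; split; [exact: telescopic_set2 | split; [exact: minimal_gens2 | split]].
    by move=> x; rewrite SE m2 reflective_sg2.
  by apply: Or42; exists n; split; last rewrite -m2.
- exists [:: 3; 3 * n + 2]; split; [exact: telescopic_set3 | split; [exact: minimal_gens3 | split]].
    by move=> x; rewrite SE m3 reflective_sg3.
  by apply: Or43; exists n; split; last rewrite -m3.
- exists [:: 4; 4 * n + 2; 4 * n + 3]; split; first exact: telescopic_set4.
  split; first by apply: minimal_gens4; lia.
  split; first by move=> x; rewrite SE m4 reflective_sg4.
  by apply: Or44; exists n; split; last rewrite -m4.
Qed.
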